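(* Let $\hat W^{\rm opt}$ be the optimal value of (P1) and let $\hat W=\max\{\hat W^{\rm narrow},\hat W^{\rm opt,wide}\}$, i.e. the value obtained by Algorithm I when Algorithm IIb is replaced by an exact (exhaustive) optimization of (P1) restricted to pairs in $\mathcal M^{\rm wide}$. Then $\hat W\ge\hat W^{\rm opt}/(1+T+\Delta+2J)$ if $\mathcal M^{\rm wide}=\emptyset$, and $\hat W\ge\hat W^{\rm opt}/(2+T+\Delta+2J)$ otherwise.
   Context: Setup. Users $\{1,\dots,K\}$ partitioned into groups $\mathcal G_1,\dots,\mathcal G_L$; $N$ RBs; a chunk is a vector $c\in\{0,1\}^N$ whose ones form a nonempty contiguous block, ${\rm Tail}(c)$ its last index; $\mathcal U$ the family of nonempty $U\subseteq\{1,\dots,K\}$ with $|U|\le T$ and $|U\cap\mathcal G_s|\le1$ for all $s$; pairs are elements of $\mathcal M=\mathcal U\times\mathcal C$. Metrics $p(U,c)\ge0$; weights $\beta^q(U,c)\in[0,1]$ ($q=1,\dots,J$); binary weights $\alpha^q(U,c)\in\{0,1\}$ ($q\in\mathcal I$, finite) with $\sum_{q\in\mathcal I}\alpha^q(U,c)\le\Delta$ per pair. A set $F$ of pairs is feasible if each group meets $U$ for at most one $(U,c)\in F$, each RB lies in $c$ for at most one $(U,c)\in F$, $\sum_F\beta^q\le1$ ($q\le J$), $\sum_F\alpha^q\le1$ ($q\in\mathcal I$); (P1) maximizes $\sum_F p$ over feasible $F$. Pairs conflict if some group meets both user sets, or the chunks share an RB, or some $q\in\mathcal I$ has both $\alpha^q$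 equal to 1. $\mathcal M^{\rm narrow}=\{(U,c):\beta^q(U,c)\le1/2\ \forall q\}$, $\mathcal M^{\rm wide}=\mathcal M\setminus\mathcal M^{\rm narrow}$; $\hat W^{\rm opt,wide}$ is the optimum of (P1) restricted to pairs in $\mathcal M^{\rm wide}$ (0 if empty); $\max_{q\le J}\beta^q:=0$ if $J=0$. $\hat W^{\rm narrow}$ is the value of the output of Algorithm IIa: set $p'=p$ on $\mathcal M^{\rm narrow}$, empty stack $S$; for $j=1,\dots,N$, let $(U^*,c^* )$ maximize $p'$ over pairs of $\mathcal M^{\rm narrow}$ with ${\rm Tail}(c)=j$; if $\hat p=p'(U^*,c^* )>0$, push it on $S$ and for each $(U,c)\in\mathcal M^{\rm narrow}$ with $p'(U,c)>0$ subtract $\hat p$ if it conflicts with $(U^*,c^* )$, else subtract $2\hat p\max_q\beta^q(U,c)$. Then pop $S$ from the top, adding each popped pair to an initially empty $S'$ if $S'$ plus it is feasible; $\hat W^{\rm narrow}=\sum_{S'}p$. *)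

From HB Require Import structures.
From mathcomp Require Import all_boot all_order all_algebra.
Set Implicit Arguments. Unset Strict Implicit. Unset Printing Implicit Defensive.
Import Order.TTheory GRing.Theory Num.Theory.
Local Open Scope ring_scope.

(* Users are 'I_K, RBs are 'I_N (indices 0..N-1), groups are 'I_L and the
   partition of users into groups is given by grp : 'I_K -> 'I_L.
   A pair (U,c) is an element of {set 'I_K} * {set 'I_N}; only "valid" pairs
   (U in the family 𝒰, c a chunk) belong to M. *)
Definition pairT (K N : nat) := ({set 'I_K} * {set 'I_N})%type.

Section Model.
Context (K N L T J Delta : nat) (Idx : finType) (R : realFieldType)
        (grp : 'I_K -> 'I_L)
        (p : pairT K N -> R)
        (beta : 'I_J -> pairT K N -> R)
        (alpha : Idx -> pairT K N -> bool).

Definition meets (s : 'I_L) (U : {set 'I_K}) : bool := [exists u in U, grp u == s].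

Definition is_chunk (c : {set 'I_N}) : bool :=
  (c != set0) &&
  [forall i : 'I_N, forall j : 'I_N, forall k : 'I_N,
     ((i <= j)%N && (j <= k)%N && (i \in c) && (k \in c)) ==> (j \in c)].

Definition tail (c : {set 'I_N}) : nat := \max_(i in c) (i : nat).

Definition in_U (U : {set 'I_K}) : bool :=
  (U != set0) && (#|U| <= T)%N &&
  [forall s : 'I_L, (#|[set u in U | grp u == s]| <= 1)%N].

Definition valid (x : pairT K N) : bool := in_U x.1 && is_chunk x.2.

Definition feasible (F : {set pairT K N}) : bool :=
  [&& [forall x in F, valid x],
      [forall s : 'I_L, (#|[set x in F | meets s x.1]| <= 1)%N],
      [forall i : 'I_N, (#|[set x in F | i \in x.2]| <= 1)%N],
      [forall q : 'I_J, \sum_(x in F) beta q x <= 1] &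
      [forall q : Idx, (\sum_(x in F) (alpha q x : nat) <= 1)%N]].

Definition value (F : {set pairT K N}) : R := \sum_(x in F) p x.

Definition Wopt : R :=
  \big[Num.max/0]_(F : {set pairT K N} | feasible F) value F.

Definition conflict (x y : pairT K N) : bool :=
  [exists s : 'I_L, meets s x.1 && meets s y.1] ||
  (x.2 :&: y.2 != set0) ||
  [exists q : Idx, alpha q x && alpha q y].

(* max_q beta^q (0 if J = 0; beta >= 0) *)
Definition maxbeta (x : pairT K N) : R := \big[Num.max/0]_(q < J) beta q x.

Definition narrow (x : pairT K N) : bool :=
  valid x && [forall q : 'I_J, beta q x <= 2^-1].

Definition wide (x : pairT K N) : bool := valid x && ~~ narrow x.

(* W^{opt,wide} : optimum of (P1) restricted to pairs in M^wide (0 if empty) *)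
Definition Wopt_wide : R :=
  \big[Num.max/0]_(F : {set pairT K N} |
       feasible F && [forall x in F, wide x]) value F.

(* state: current p' (meaningful on M^narrow) and the stack (top = head) *)
Definition stateT := ((pairT K N -> R) * seq (pairT K N))%type.

Definition init_state : stateT := (p, [::]).

Definition update (p' : pairT K N -> R) (xs : pairT K N) : pairT K N -> R :=
  let ph := p' xs in
  fun x => if narrow x && (0 < p' x) then
             p' x - (if conflict x xs then ph else 2 * ph * maxbeta x)
           else p' x.

(* iteration j (RB j, 0-based): xs is a maximizer of p' over narrow pairs with
   tail j (any tie-breaking); if its value is positive it is pushed. *)
Definition step (j : nat) (st st' : stateT) : Prop :=
  ((forall x, narrow x -> tail x.2 = j -> st.1 x <= 0) /\ st' = st) \/
  (exists xs, [/\ narrow xs, tail xs.2 = j,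
                 (forall x, narrow x -> tail x.2 = j -> st.1 x <= st.1 xs),
                 0 < st.1 xs &
                 st' = (update st.1 xs, xs :: st.2)]).

Fixpoint reach (j : nat) (st : stateT) : Prop :=
  match j with
  | 0 => st = init_state
  | j'.+1 => exists st0, reach j' st0 /\ step j' st0 st
  end.

Definition pop_phase (S : seq (pairT K N)) : {set pairT K N} :=
  foldl (fun acc x => if feasible (x |: acc) then x |: acc else acc)
        set0 S.

Definition Wnarrow (st : stateT) : R := value (pop_phase st.2).

End Model.

From Pilot Require Import Defs.
From HB Require Import structures.
From mathcomp Require Import all_boot all_order all_algebra.
From mathcomp Require Import lra.
Set Implicit Arguments. Unset Strict Implicit. Unset Printing Implicit Defensive.
Import Order.TTheory GRing.Theory Num.Theory.
Local Open Scope ring_scope.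

(* The proof is the local-ratio argument behind Algorithm IIa.  Put
   rho = 1+T+Delta+2J and let Phi be the sum of the values p-hat of the pairs
   pushed during the forward phase.  Along any run we maintain three facts
   (record [invariant]):
   - after iteration j, p' <= 0 on every narrow pair with tail < j;
   - popping the stack on top of a feasible set A of narrow pairs of positive
     p' yields a set of value >= Phi + sum_A p'  ([pop_push]);
   - for every feasible set F of narrow pairs, sum_F (p - p') <= rho * Phi,
     because pushing a pair xs lowers p' on F by at most rho * p'(xs)
     ([push_charge_sum]): F holds at most T pairs sharing a group with xs, at
     most Delta sharing an alpha-resource, at most one pair meeting the chunk
     of xs (all such chunks contain its tail), and sum_F 2 maxbeta <= 2J.
   At the end of the run p' <= 0 on all narrow pairs, so the narrow part of any
   feasible set is worth at most rho * W^narrow; its wide part is a feasible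
   set of wide pairs, worth at most W^{opt,wide}, and empty if no pair is wide. *)

Section LocalRatio.
Context (K N L T J Delta : nat) (Idx : finType) (R : realFieldType)
        (grp : 'I_K -> 'I_L) (p : pairT K N -> R)
        (beta : 'I_J -> pairT K N -> R) (alpha : Idx -> pairT K N -> bool).

Local Notation pair := (pairT K N).
Local Notation valid := (@Defs.valid K N L T grp).
Local Notation narrow := (@Defs.narrow K N L T J R grp beta).
Local Notation feasible := (@Defs.feasible K N L T J Idx R grp beta alpha).
Local Notation conflict := (@Defs.conflict K N L Idx grp alpha).
Local Notation maxbeta := (@Defs.maxbeta K N J R beta).
Local Notation update := (@Defs.update K N L T J Idx R grp beta alpha).
Local Notation value := (@Defs.value K N R p).

Hypothesis hbeta : forall q x, valid x -> 0 <= beta q x <= 1.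
Hypothesis halpha : forall x, valid x -> (\sum_(q : Idx) (alpha q x : nat) <= Delta)%N.

Local Notation rho := ((1 + T + Delta + 2 * J)%:R : R).

Lemma narrow_valid x : narrow x -> valid x.
Proof. by case/andP. Qed.

Lemma valid_chunk x : valid x -> is_chunk x.2.
Proof. by case/andP. Qed.

Lemma chunk_neq0 (c : {set 'I_N}) : is_chunk c -> c != set0.
Proof. by case/andP. Qed.

Lemma tail_mem (c : {set 'I_N}) : c != set0 -> exists2 t : 'I_N, t \in c & tail c = t.
Proof.
case/set0Pn=> i0 ci0.
have c_gt0 : (0 < #|mem c|)%N by apply/card_gt0P; exists i0.
have [t ct tE] := @eq_bigmax_cond _ (mem c) (fun i : 'I_N => (i : nat)) c_gt0.
by exists t.
Qed.

Lemma le_tail (c : {set 'I_N}) (i : 'I_N) : i \in c -> (i <= tail c)%N.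
Proof. exact: (@leq_bigmax_cond _ (mem c) (fun i : 'I_N => (i : nat))). Qed.

Lemma tail_lt x : valid x -> (tail x.2 < N)%N.
Proof. by move/valid_chunk/chunk_neq0/tail_mem=> [t _ ->]. Qed.

Lemma same_tail_meet (c d : {set 'I_N}) : c != set0 -> d != set0 ->
  tail c = tail d -> c :&: d != set0.
Proof.
move=> /tail_mem[t ct ctE] /tail_mem[t' dt' dtE] cd.
have tt' : t = t' by apply: val_inj; rewrite /= -ctE -dtE.
by apply/set0Pn; exists t; rewrite inE ct tt' dt'.
Qed.

Lemma chunk_between (c : {set 'I_N}) (i j k : 'I_N) :
  is_chunk c -> i \in c -> k \in c -> (i <= j <= k)%N -> j \in c.
Proof.
case/andP=> _ /forallP/(_ i)/forallP/(_ j)/forallP/(_ k) h ci ck /andP[ij jk].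
by apply: (implyP h); rewrite ij jk ci ck.
Qed.

(* A chunk that meets d and does not end before Tail(d) contains Tail(d):
   this is why the RB constraint is charged only once per push. *)
Lemma chunk_contains_tail (c d : {set 'I_N}) (t : 'I_N) :
  is_chunk c -> tail d = t -> c :&: d != set0 -> (t <= tail c)%N -> t \in c.
Proof.
move=> chc dt /set0Pn[i]; rewrite inE => /andP[ci di] tc.
have [t' ct' ct'E] := tail_mem (chunk_neq0 chc).
apply: (chunk_between chc ci ct'); rewrite -ct'E tc andbT -dt.
exact: le_tail.
Qed.

Lemma maxbeta_ge0 x : 0 <= maxbeta x.
Proof. exact: bigmax_ge_id. Qed.

Lemma beta_le_maxbeta q x : beta q x <= maxbeta x.
Proof. exact: le_bigmax. Qed.

Lemma sumbeta_ge0 x : valid x -> 0 <= \sum_(q < J) beta q x.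
Proof. by move=> vx; apply: sumr_ge0 => q _; case/andP: (hbeta q vx). Qed.

Lemma maxbeta_le_sum x : valid x -> maxbeta x <= \sum_(q < J) beta q x.
Proof.
move=> vx; apply: bigmax_le => [|q _]; first exact: sumbeta_ge0.
rewrite (bigD1 q) //= lerDl; apply: sumr_ge0 => i _; by case/andP: (hbeta i vx).
Qed.

Lemma feasible_valid F x : feasible F -> x \in F -> valid x.
Proof. by case/and5P=> /forall_inP hv _ _ _ _ /hv. Qed.

Lemma sum_le_subset (G F : {set pair}) (f : pair -> R) :
  G \subset F -> (forall x, x \in F -> 0 <= f x) ->
  \sum_(x in G) f x <= \sum_(x in F) f x.
Proof.
move=> sGF f0; rewrite [X in _ <= X](big_setID G) /= (setIidPr sGF) lerDl.
by apply: sumr_ge0 => x; rewrite inE => /andP[_ /f0].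
Qed.

Lemma feasible_sub (G F : {set pair}) : G \subset F -> feasible F -> feasible G.
Proof.
move=> sGF fF; move: (fF) => /and5P[/forall_inP hv /forallP hg /forallP hr /forallP hb /forallP ha].
have sel (P : pred pair) : [set x in G | P x] \subset [set x in F | P x].
  by apply/subsetP => x; rewrite !inE => /andP[/(subsetP sGF) -> ->].
apply/and5P; split.
- by apply/forall_inP => x /(subsetP sGF) /hv.
- by apply/forallP => s; apply: leq_trans (hg s); apply: subset_leq_card.
- by apply/forallP => i; apply: leq_trans (hr i); apply: subset_leq_card.
- apply/forallP => q; apply: le_trans (hb q); apply: sum_le_subset => // x xF.
  by case/andP: (hbeta q (feasible_valid fF xF)).
- apply/forallP => q; apply: leq_trans (ha q).
  by apply: (sub_le_big leqnn (fun m n => leq_addr n m)) => x; apply: (subsetP sGF).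
Qed.

Lemma feasible0 : feasible set0.
Proof.
have sel0 (P : pred pair) : #|[set x in set0 | P x]| = 0%N.
  by apply/eqP; rewrite cards_eq0; apply/eqP/setP => x; rewrite !inE.
apply/and5P; split.
- by apply/forall_inP => x; rewrite inE.
- by apply/forallP => s; rewrite sel0.
- by apply/forallP => i; rewrite sel0.
- by apply/forallP => q; rewrite big_set0 ler01.
- by apply/forallP => q; rewrite big_set0.
Qed.

Lemma card_sel_add (A : {set pair}) xs (P : pred pair) :
  xs \notin A -> (#|[set x in A | P x]| <= 1)%N ->
  (P xs -> forall y, y \in A -> ~~ P y) ->
  (#|[set x in xs |: A | P x]| <= 1)%N.
Proof.
move=> xsA selA hP; case Pxs: (P xs).
- suff -> : [set x in xs |: A | P x] = [set xs] by rewrite cards1.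
  apply/setP => x; rewrite !inE; case: eqP => [-> //|_ /=].
  by apply/negbTE/negP => /andP[xA Px]; move: (hP Pxs x xA); rewrite Px.
- suff -> : [set x in xs |: A | P x] = [set x in A | P x] by [].
  by apply/setP => x; rewrite !inE; case: eqP => [->|//]; rewrite Pxs !andbF.
Qed.

Lemma feasible_add (A : {set pair}) xs :
  feasible A -> narrow xs -> xs \notin A ->
  (forall y, y \in A -> ~~ conflict y xs) ->
  (forall q, \sum_(y in A) beta q y <= 2^-1) ->
  feasible (xs |: A).
Proof.
move=> /and5P[/forall_inP hv /forallP hg /forallP hr /forallP hb /forallP ha] nxs xsA nc hA.
have noconf y : y \in A -> conflict y xs -> False by move=> yA; apply/negP/nc.
apply/and5P; split.
- apply/forall_inP => x; rewrite !inE => /orP[/eqP->|/hv//]; exact: narrow_valid.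
- apply/forallP => s; apply: card_sel_add => // Ps y yA; apply/negP => Py.
  by apply: (noconf y yA); rewrite /conflict -orbA; apply/orP; left; apply/existsP; exists s; rewrite Py.
- apply/forallP => i; apply: card_sel_add => // Pi y yA; apply/negP => Py.
  apply: (noconf y yA); rewrite /conflict; apply/orP; left; apply/orP; right.
  by apply/set0Pn; exists i; rewrite inE Py.
- apply/forallP => q; rewrite big_setU1 //=.
  have : beta q xs <= 2^-1 by case/andP: nxs => _ /forallP.
  by have := hA q; lra.
- apply/forallP => q; rewrite big_setU1 //=; case aq: (alpha q xs); last exact: ha.
  rewrite big1 // => y yA; apply/eqP; rewrite eqb0; apply/negP => ay.
  by apply: (noconf y yA); rewrite /conflict; apply/orP; right; apply/existsP; exists q; rewrite ay aq.
Qed.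

Lemma conflict_self x : valid x -> conflict x x.
Proof. by move/valid_chunk/chunk_neq0=> c0; rewrite /conflict setIid c0 orbT. Qed.

Lemma update_le p0 xs x : 0 <= p0 xs -> update p0 xs x <= p0 x.
Proof.
move=> pxs; rewrite /update; case: ifP => // _; rewrite lerBlDr lerDl.
by case: ifP => // _; rewrite !mulr_ge0 ?maxbeta_ge0.
Qed.

(* The pushed pair conflicts with itself, so its p' drops to 0. *)
Lemma update_self p0 xs : narrow xs -> 0 < p0 xs -> update p0 xs xs = 0.
Proof.
by move=> nxs pxs; rewrite /update nxs pxs conflict_self ?subrr //; exact: narrow_valid.
Qed.

Lemma update_decrease p0 xs y : narrow y -> 0 < p0 y ->
  p0 y - update p0 xs y = if conflict y xs then p0 xs else 2 * p0 xs * maxbeta y.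
Proof. by move=> ny py; rewrite /update ny py /= opprB addrC subrK. Qed.

Definition pop_one (acc : {set pair}) (x : pair) : {set pair} :=
  if feasible (x |: acc) then x |: acc else acc.

(* If a pushed pair xs is rejected when popped onto A, the decrease of p' over
   A caused by its push already pays for p'(xs): either some pair of A
   conflicts with xs, or some weight of A exceeds 1/2. *)
Lemma rejected_push_paid p0 xs (A : {set pair}) :
  narrow xs -> 0 < p0 xs -> feasible A -> xs \notin A ->
  (forall y, y \in A -> narrow y && (0 < p0 y)) -> ~~ feasible (xs |: A) ->
  p0 xs <= \sum_(y in A) (p0 y - update p0 xs y).
Proof.
move=> nxs pxs fA xsA hA infeas.
have nA y : y \in A -> narrow y by case/hA/andP.
have pA y : y \in A -> 0 < p0 y by case/hA/andP.
have [/exists_inP[y yA cy]|noconf] := boolP [exists y in A, conflict y xs].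
  rewrite (bigD1 y) //= update_decrease ?nA ?pA // cy lerDl.
  by apply: sumr_ge0 => z _; rewrite subr_ge0 update_le // ltW.
have nc y : y \in A -> ~~ conflict y xs.
  by move=> yA; apply: contra noconf => cy; apply/exists_inP; exists y.
have [q heavy] : exists q, 2^-1 < \sum_(y in A) beta q y.
  apply/existsP; move: infeas; apply: contraR; rewrite negb_exists => /forallP light.
  by apply: feasible_add => // q; move: (light q); rewrite -leNgt.
rewrite (eq_bigr (fun y => 2 * p0 xs * maxbeta y)); last first.
  by move=> y yA; rewrite update_decrease ?nA ?pA // (negbTE (nc y yA)).
rewrite -mulr_sumr.
have half_le : 2^-1 <= \sum_(y in A) maxbeta y.
  by apply: le_trans (ltW heavy) _; apply: ler_sum => y _; exact: beta_le_maxbeta.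
have := ler_wpM2l (ltW pxs) half_le; lra.
Qed.

Lemma pop_push p0 xs (A : {set pair}) :
  narrow xs -> 0 < p0 xs -> feasible A ->
  (forall y, y \in A -> narrow y && (0 < update p0 xs y)) ->
  p0 xs + \sum_(y in A) update p0 xs y <= \sum_(y in pop_one A xs) p0 y.
Proof.
move=> nxs pxs fA hA.
have le1 y : update p0 xs y <= p0 y by apply: update_le; exact: ltW.
have xsA : xs \notin A by apply/negP => /hA/andP[_]; rewrite update_self ?ltxx.
rewrite /pop_one; case: ifPn => [_|infeas].
  by rewrite big_setU1 //= lerD2l; apply: ler_sum => y _.
have hA0 y : y \in A -> narrow y && (0 < p0 y).
  by case/hA/andP=> -> h; apply: lt_le_trans h (le1 y).
have := rejected_push_paid nxs pxs fA xsA hA0 infeas.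
rewrite sumrB; lra.
Qed.

Lemma sum_bool_card (I : finType) (F : {set I}) (P : pred I) :
  (\sum_(x in F) (P x : nat))%N = #|[set x in F | P x]|.
Proof.
rewrite -sum1_card big_mkcond [RHS]big_mkcond /=; apply: eq_bigr => x _.
by rewrite inE; case: (x \in F); case: (P x).
Qed.

Lemma exists_le_sum (I : finType) (P : pred I) :
  (([exists i, P i] : nat) <= \sum_i (P i : nat))%N.
Proof. by case: existsP => [[i Pi]|_] //=; rewrite (bigD1 i) //= Pi. Qed.

Lemma meets_card (U : {set 'I_K}) : (\sum_s (meets grp s U : nat) <= #|U|)%N.
Proof.
have -> : (\sum_s (meets grp s U : nat))%N = #|[set s | meets grp s U]|.
  by rewrite -sum1dep_card [RHS]big_mkcond; apply: eq_bigr => s _; case: meets.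
apply: leq_trans (leq_imset_card grp U); apply/subset_leq_card/subsetP => s; rewrite inE => /exists_inP[u uU /eqP <-].
exact: imset_f.
Qed.

(* Since each group meets at most one pair of F, at most T pairs of F share a
   group with a valid pair xs. *)
Lemma count_groups (F : {set pair}) xs : feasible F -> valid xs ->
  (\sum_(x in F) ([exists s, meets grp s x.1 && meets grp s xs.1] : nat) <= T)%N.
Proof.
case/and5P=> _ /forallP hg _ _ _ vxs.
apply: leq_trans (_ : \sum_(x in F) \sum_s (meets grp s x.1 && meets grp s xs.1 : nat) <= _)%N.
  by apply: leq_sum => x _; apply: exists_le_sum.
rewrite exchange_big /=.
apply: leq_trans (_ : \sum_s (meets grp s xs.1 : nat) <= _)%N.
  apply: leq_sum => s _; case: (meets grp s xs.1); last by rewrite big1 // => x _; rewrite andbF.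
  by under eq_bigr do rewrite andbT; rewrite sum_bool_card.
apply: leq_trans (meets_card _) _.
by case/andP: vxs => /andP[/andP[_ ->]].
Qed.

Lemma count_resources (F : {set pair}) xs : feasible F -> valid xs ->
  (\sum_(x in F) ([exists q, alpha q x && alpha q xs] : nat) <= Delta)%N.
Proof.
case/and5P=> _ _ _ _ /forallP ha vxs.
apply: leq_trans (_ : \sum_(x in F) \sum_q (alpha q x && alpha q xs : nat) <= _)%N.
  by apply: leq_sum => x _; apply: exists_le_sum.
rewrite exchange_big /=; apply: leq_trans (halpha vxs); apply: leq_sum => q _.
case: (alpha q xs); last by rewrite big1 // => x _; rewrite andbF.
by under eq_bigr do rewrite andbT.
Qed.

Lemma count_rb (F : {set pair}) (t : 'I_N) : feasible F ->
  (\sum_(x in F) (t \in x.2 : nat) <= 1)%N.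
Proof. by case/and5P=> _ _ /forallP hr _ _; rewrite sum_bool_card. Qed.

Lemma count_weights (F : {set pair}) : feasible F ->
  \sum_(x in F) \sum_(q < J) beta q x <= J%:R.
Proof.
case/and5P=> _ _ _ /forallP hb _; rewrite exchange_big /=.
apply: le_trans (_ : \sum_(q < J) (1 : R) <= _); first exact: ler_sum.
by rewrite sumr_const card_ord.
Qed.

(** Charging a push to a feasible set of narrow pairs *)

(* The share charged to x when xs, whose chunk has tail t, is pushed: one unit
   for each constraint (group, RB t, alpha-resource) shared with xs, plus
   twice the total weight of x. *)
Definition charge (xs : pair) (t : 'I_N) (x : pair) : R :=
  ([exists s, meets grp s x.1 && meets grp s xs.1] : nat)%:R +
  (t \in x.2 : nat)%:R + ([exists q, alpha q x && alpha q xs] : nat)%:R +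
  2 * \sum_(q < J) beta q x.

(* The charge covers a non-conflicting decrease 2 p'(xs) maxbeta(x). *)
Lemma maxbeta_le_charge xs (t : 'I_N) x : valid x -> 2 * maxbeta x <= charge xs t x.
Proof.
move=> vx; have := maxbeta_le_sum vx; rewrite /charge.
by have := ler0n R [exists s, meets grp s x.1 && meets grp s xs.1];
   have := ler0n R (t \in x.2); have := ler0n R [exists q, alpha q x && alpha q xs]; lra.
Qed.

Lemma conflict_le_charge xs (t : 'I_N) x : valid x -> tail xs.2 = t -> (t <= tail x.2)%N ->
  conflict x xs -> 1 <= charge xs t x.
Proof.
move=> vx tE tx cf.
have units (b1 b2 b3 : bool) (s : R) : [|| b1, b2 | b3] -> 0 <= s ->
    1 <= (b1 : nat)%:R + (b2 : nat)%:R + (b3 : nat)%:R + 2 * s.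
  by case: b1; case: b2; case: b3 => //= _; rewrite ?mulr1n ?mulr0n; lra.
apply: units (sumbeta_ge0 vx); move: cf; rewrite /conflict -orbA.
case/or3P=> [-> //|c|->]; last by rewrite !orbT.
by rewrite (chunk_contains_tail (valid_chunk vx) tE c tx) orbT.
Qed.

Lemma charge_sum xs (t : 'I_N) (F : {set pair}) : feasible F -> valid xs ->
  \sum_(x in F) charge xs t x <= rho.
Proof.
move=> fF vxs; rewrite /charge !big_split /= -!natr_sum -mulr_sumr.
have := count_weights fF.
have := count_groups fF vxs; have := count_rb t fF; have := count_resources fF vxs.
rewrite -!(ler_nat R) !natrD; lra.
Qed.

Lemma push_decrease_le_charge p0 xs (t : 'I_N) x :
  0 < p0 xs -> tail xs.2 = t ->
  (forall z, narrow z -> (tail z.2 < t)%N -> p0 z <= 0) ->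
  narrow x -> p0 x - update p0 xs x <= p0 xs * charge xs t x.
Proof.
move=> pxs tE settled nx; have vx := narrow_valid nx.
have charge_ge0 : 0 <= charge xs t x.
  by apply: le_trans (maxbeta_le_charge xs t vx); rewrite mulr_ge0 ?maxbeta_ge0.
have [px|px] := ltP 0 (p0 x); last first.
  by rewrite /update (le_gtF px) andbF subrr mulr_ge0 // ltW.
have tx : (t <= tail x.2)%N.
  by rewrite leqNgt; apply/negP => /(settled x nx); rewrite leNgt px.
rewrite update_decrease //; case: ifP => cf.
  by rewrite -{1}[p0 xs]mulr1; apply: ler_wpM2l; [exact: ltW | exact: conflict_le_charge].
by rewrite mulrAC mulrC; apply: ler_wpM2l; [exact: ltW | exact: maxbeta_le_charge].
Qed.

Lemma push_charge_sum p0 xs (F : {set pair}) :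
  narrow xs -> 0 < p0 xs ->
  (forall z, narrow z -> (tail z.2 < tail xs.2)%N -> p0 z <= 0) ->
  feasible F -> (forall x, x \in F -> narrow x) ->
  \sum_(x in F) (p0 x - update p0 xs x) <= rho * p0 xs.
Proof.
move=> nxs pxs settled fF nF; have vxs := narrow_valid nxs.
have [t _ tE] := tail_mem (chunk_neq0 (valid_chunk vxs)).
apply: le_trans (_ : \sum_(x in F) p0 xs * charge xs t x <= _).
  by apply: ler_sum => x xF; apply: push_decrease_le_charge; rewrite -?tE ?nF.
by rewrite -mulr_sumr mulrC; apply: ler_wpM2r; [exact: ltW | exact: charge_sum].
Qed.

(** The invariant of the forward phase *)

(* After j iterations in state st, with Phi the total value pushed so far. *)
Record invariant (j : nat) (st : stateT K N R) (Phi : R) : Prop := Invariant {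
  inv_settled : forall x, narrow x -> (tail x.2 < j)%N -> st.1 x <= 0;
  inv_pop : forall A, feasible A -> (forall y, y \in A -> narrow y && (0 < st.1 y)) ->
    Phi + \sum_(y in A) st.1 y <= value (foldl pop_one A st.2);
  inv_charge : forall F, feasible F -> (forall x, x \in F -> narrow x) ->
    \sum_(x in F) (p x - st.1 x) <= rho * Phi }.

Lemma invariant_init : invariant 0 (p, [::]) 0.
Proof.
split=> //= [A _ _|F _ _]; first by rewrite add0r.
by rewrite mulr0 big1 // => x _; rewrite subrr.
Qed.

Lemma invariant_skip j st Phi : invariant j st Phi ->
  (forall x, narrow x -> tail x.2 = j -> st.1 x <= 0) -> invariant j.+1 st Phi.
Proof.
case=> settled pop charge tail_j; split=> // x nx.
by rewrite ltnS leq_eqVlt => /orP[/eqP|]; [exact: tail_j | exact: settled].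
Qed.

Lemma invariant_push j st Phi xs : invariant j st Phi ->
  narrow xs -> tail xs.2 = j -> (forall x, narrow x -> tail x.2 = j -> st.1 x <= st.1 xs) ->
  0 < st.1 xs -> invariant j.+1 (update st.1 xs, xs :: st.2) (Phi + st.1 xs).
Proof.
case: st => p0 S /= [/= settled pop charge] nxs tE pmax pxs.
have le1 y : update p0 xs y <= p0 y by apply: update_le; exact: ltW.
split=> /=.
- move=> x nx; rewrite ltnS leq_eqVlt => /orP[/eqP tx|]; last by move/(settled x nx); apply: le_trans.
  rewrite /update nx /=; case: (ltP 0 (p0 x)) => // _.
  suff -> : conflict x xs by rewrite subr_le0 pmax.
  rewrite /conflict; apply/orP; left; apply/orP; right; apply: same_tail_meet.
  + exact/chunk_neq0/valid_chunk/narrow_valid.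
  + exact/chunk_neq0/valid_chunk/narrow_valid.
  + by rewrite tx tE.
- move=> A fA hA; have fA' : feasible (pop_one A xs) by rewrite /pop_one; case: ifP.
  have hA' y : y \in pop_one A xs -> narrow y && (0 < p0 y).
    have old z : z \in A -> narrow z && (0 < p0 z).
      by case/hA/andP=> -> h; apply: lt_le_trans h (le1 z).
    rewrite /pop_one; case: ifP => _; last exact: old.
    by rewrite !inE => /orP[/eqP->|/old //]; rewrite nxs pxs.
  apply: le_trans (pop _ fA' hA'); rewrite -addrA lerD2l.
  exact: pop_push.
- move=> F fF nF; rewrite mulrDr (eq_bigr (fun x => (p x - p0 x) + (p0 x - update p0 xs x))); last first.
    by move=> x _; rewrite addrA subrK.
  rewrite big_split /=; apply: lerD; first exact: charge.
  by apply: push_charge_sum => // z nz; rewrite tE; exact: settled.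
Qed.

Lemma reach_invariant j st : reach T grp p beta alpha j st -> exists Phi, invariant j st Phi.
Proof.
elim: j st => [st -> | j IH st [st0 [/IH [Phi inv] step]]]; first by exists 0; exact: invariant_init.
case: step => [[tail_j ->] | [xs [nxs tE pmax pxs ->]]].
- by exists Phi; exact: invariant_skip.
- by exists (Phi + st0.1 xs); exact: invariant_push.
Qed.

Definition narrow_set : {set pair} := [set x | narrow x].

Lemma value_split (F : {set pair}) :
  value F = value (F :&: narrow_set) + value (F :\: narrow_set).
Proof. exact: big_setID. Qed.

Lemma narrow_part_le st (F : {set pair}) : reach T grp p beta alpha N st -> feasible F ->
  value (F :&: narrow_set) <= rho * Wnarrow T grp p beta alpha st.
Proof.
case/reach_invariant=> Phi [settled pop charge] fF.
have Phi_le : Phi <= Wnarrow T grp p beta alpha st.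
  have no_pair y : y \in (set0 : {set pair}) -> narrow y && (0 < st.1 y) by rewrite inE.
  by have := pop set0 feasible0 no_pair; rewrite big_set0 addr0.
have fN : feasible (F :&: narrow_set) by apply: feasible_sub fF; exact: subsetIl.
have nN x : x \in F :&: narrow_set -> narrow x by rewrite !inE => /andP[].
apply: le_trans (_ : \sum_(x in F :&: narrow_set) (p x - st.1 x) <= _).
  apply: ler_sum => x /nN nx.
  by have := settled x nx (tail_lt (narrow_valid nx)); lra.
apply: le_trans (charge _ fN nN) _; apply: ler_wpM2l => //; exact: ler0n.
Qed.

Lemma wide_part_le (F : {set pair}) : feasible F ->
  value (F :\: narrow_set) <= Wopt_wide T grp p beta alpha.
Proof.
move=> fF; apply: (le_bigmax_cond _ _ (P := fun G => feasible G && [forall x in G, wide T grp beta x])).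
rewrite (feasible_sub (subsetDl F narrow_set) fF); apply/forall_inP => x.
by rewrite !inE => /andP[nx xF]; rewrite /wide nx (feasible_valid fF xF).
Qed.

Lemma wide_part_eq0 (F : {set pair}) : (forall x, ~~ wide T grp beta x) -> feasible F ->
  value (F :\: narrow_set) = 0.
Proof.
move=> no_wide fF; apply: big1 => x; rewrite !inE => /andP[nx xF].
by move: (no_wide x); rewrite /wide (feasible_valid fF xF) nx.
Qed.

Lemma Wopt_le_narrow st : reach T grp p beta alpha N st -> (forall x, ~~ wide T grp beta x) ->
  Wopt T grp p beta alpha <= rho * Wnarrow T grp p beta alpha st.
Proof.
move=> run no_wide; apply: bigmax_le => [|F fF].
  by apply: le_trans (narrow_part_le run feasible0); rewrite set0I /value big_set0.
by rewrite value_split wide_part_eq0 // addr0; exact: narrow_part_le.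
Qed.

Lemma Wopt_le_narrow_wide st : reach T grp p beta alpha N st ->
  Wopt T grp p beta alpha <= rho * Wnarrow T grp p beta alpha st + Wopt_wide T grp p beta alpha.
Proof.
move=> run; apply: bigmax_le => [|F fF].
  apply: addr_ge0; last exact: bigmax_ge_id.
  by apply: le_trans (narrow_part_le run feasible0); rewrite set0I /value big_set0.
by rewrite value_split; apply: lerD; [exact: narrow_part_le | exact: wide_part_le].
Qed.

End LocalRatio.

Theorem corollary1 (K N L T J Delta : nat) (Idx : finType) (R : realFieldType)
  (grp : 'I_K -> 'I_L) (p : pairT K N -> R)
  (beta : 'I_J -> pairT K N -> R) (alpha : Idx -> pairT K N -> bool)
  (hp : forall x, valid T grp x -> 0 <= p x)
  (hbeta : forall q x, valid T grp x -> 0 <= beta q x <= 1)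
  (halpha : forall x, valid T grp x -> (\sum_(q : Idx) (alpha q x : nat) <= Delta)%N)
  (st : stateT K N R)
  (hrun : reach T grp p beta alpha N st) :
  let What := Num.max (Wnarrow T grp p beta alpha st)
                      (Wopt_wide T grp p beta alpha) in
  ((forall x, ~~ wide T grp beta x) ->
     Wopt T grp p beta alpha / (1 + T + Delta + 2 * J)%:R <= What) /\
  ((exists x, wide T grp beta x) ->
     Wopt T grp p beta alpha / (2 + T + Delta + 2 * J)%:R <= What).
Proof.
move=> What.
have Wn_le : Wnarrow T grp p beta alpha st <= What by rewrite le_max lexx.
have Ww_le : Wopt_wide T grp p beta alpha <= What by rewrite le_max lexx orbT.
have rho_Wn : (1 + T + Delta + 2 * J)%:R * Wnarrow T grp p beta alpha st <=
              (1 + T + Delta + 2 * J)%:R * What by rewrite ler_wpM2l ?ler0n.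
split=> [no_wide | _]; rewrite ler_pdivrMr ?ltr0n //.
- by apply: le_trans (Wopt_le_narrow hbeta halpha hrun no_wide) _; rewrite [What * _]mulrC.
- apply: le_trans (Wopt_le_narrow_wide hbeta halpha hrun) _.
  by move: rho_Wn Ww_le; rewrite !natrD; lra.
Qed.
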